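(* Let $1\le k\le s\le d$. Let $\Phi=\mathbb{E}_{S\subseteq[d],|S|=s}\,\phi_S^{\otimes k}$ and \[ \tilde\Phi=\mathbb{E}_{S\subseteq[d],|S|=s}\left[\frac{1}{s^{\underline{k}}}\sum_{\vec i,\vec j\in A(S,k)}|\vec i\rangle\langle\vec j|\right], \] where $S$ is a uniformly random subset of $[d]$ of size $s$. Then $\|\Phi-\tilde\Phi\|_1=O(k/\sqrt{s})$ (with an absolute implied constant).
   Context: $\phi_S=\left(\frac{1}{\sqrt{s}}\sum_{i\in S}|i\rangle\right)\left(\frac{1}{\sqrt{s}}\sum_{i\in S}\langle i|\right)$ for $S\subseteq[d]$ with $|S|=s$, in the computational basis of $\mathbb{C}^d$. $A(S,k)=\{(i_1,\dots,i_k)\in S^k: i_j\ne i_{j'}\text{ for }j\ne j'\}$; $|\vec i\rangle=|i_1\rangle\otimes\cdots\otimes|i_k\rangle$. $n^{\underline{k}}=n(n-1)\cdots(n-k+1)$. $\|\cdot\|_1$ is the trace norm. *)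

(* scalars are algC (algebraic complex numbers, which contain
   all the entries of the matrices below; trace norm computed over algC). *)
From HB Require Import structures.
From mathcomp Require Import all_boot all_order all_algebra all_field.
Set Implicit Arguments. Unset Strict Implicit. Unset Printing Implicit Defensive.
Import Order.TTheory GRing.Theory Num.Theory.
Local Open Scope ring_scope.

(* computational-basis index set of (C^d)^{ot k}: k-tuples (i_1..i_k) of [d] *)
Definition tup (d k : nat) := {ffun 'I_k -> 'I_d}.

Definition mx_of (d k : nat) (f : tup d k -> tup d k -> algC)
  : 'M[algC]_(#|{: tup d k}|) :=
  \matrix_(a, b) f (enum_val a) (enum_val b).

Definition tensor_pow (d k : nat) (M : 'M[algC]_d) : 'M[algC]_(#|{: tup d k}|) :=
  mx_of (fun i j : tup d k => \prod_(t < k) M (i t) (j t)).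

(* phi_S = |u_S><u_S| with u_S = s^{-1/2} sum_{i in S} |i>, s = |S| *)
Definition phi (d : nat) (S : {set 'I_d}) : 'M[algC]_d :=
  \matrix_(i, j) (if (i \in S) && (j \in S) then (#|S|%:R)^-1 else 0).

Definition unif_exp (d s n : nat) (F : {set 'I_d} -> 'M[algC]_n) : 'M[algC]_n :=
  (#|[set S : {set 'I_d} | #|S| == s]|%:R)^-1 *:
    \sum_(S : {set 'I_d} | #|S| == s) F S.

Definition inA (d k : nat) (S : {set 'I_d}) (i : tup d k) : bool :=
  [forall t, i t \in S] && injectiveb i.

Definition Phi (d s k : nat) : 'M[algC]_(#|{: tup d k}|) :=
  unif_exp s (fun S => tensor_pow k (phi S)).

Definition Phitilde (d s k : nat) : 'M[algC]_(#|{: tup d k}|) :=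
  unif_exp s (fun S => mx_of (fun i j : tup d k =>
     ((s ^_ k)%:R)^-1 * (inA S i && inA S j)%:R)).

Definition eigvals (n : nat) (A : 'M[algC]_n) : seq algC :=
  sval (closed_field_poly_normal (char_poly A)).

Definition adjointmx (n : nat) (A : 'M[algC]_n) : 'M[algC]_n :=
  \matrix_(i, j) (A j i)^*.

Definition trnorm (n : nat) (A : 'M[algC]_n) : algC :=
  \sum_(z <- eigvals (adjointmx A *m A)) sqrtC z.

From HB Require Import structures.
From mathcomp Require Import all_boot all_order all_algebra all_field.
From mathcomp Require Import zify ring.

(* [Phi - Phitilde] is the uniform average over [S] of [v v^T - w w^T], where
   [v] and [w] are the unit vectors uniformly supported on [S^k] and on
   [A(S,k)] (a subset of [S^k]).  Their overlap is [sqrt (s^_k / s^k)], hence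
   [|v - w|^2 <= 2 (1 - s^_k / s^k) <= 2 k^2 / s].  The average is Hermitian,
   so its trace norm is [Re tr ((Phi - Phitilde) U)] for some unitary [U], and
   [Re tr ((v v^T - w w^T) U) = Re <v - w, U v> + Re <v - w, U^T w>]; bounding
   [2 Re <x, y> <= t |x|^2 + |y|^2 / t] with [t = sqrt s / k] gives [3 k / sqrt s]. *)
Import Order.TTheory GRing.Theory Num.Theory Num.Def.

Set Implicit Arguments.
Unset Strict Implicit.
Unset Printing Implicit Defensive.

Lemma ffact_leq_expn n k : n ^_ k <= n ^ k.
Proof.
elim: k => [|k IH]; first by rewrite ffactn0 expn0.
by rewrite ffactnSr expnSr leq_mul // leq_subr.
Qed.

(* [n^k - n^_k <= k^2 n^(k-1)], multiplied by [n] to avoid subtraction. *)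
Lemma ffact_expn_gap n k : n * n ^ k <= n * n ^_ k + k * k * n ^ k.
Proof.
elim: k => [|k IH]; first by rewrite ffactn0 expn0 !muln1 mul0n addn0.
have step : n * n ^_ k <= n ^_ k.+1 + k * n ^ k.
  rewrite ffactnSr; case: (leqP k n) => [le_kn|lt_nk].
    by have := ffact_leq_expn n k; nia.
  by rewrite ffact_small // muln0.
have IH' : n * (n * n ^ k) <= n * (n * n ^_ k) + n * (k * k * n ^ k).
  by rewrite -mulnDr leq_mul2l IH orbT.
have step' : n * (n * n ^_ k) <= n * n ^_ k.+1 + n * (k * n ^ k).
  by rewrite -mulnDr leq_mul2l step orbT.
rewrite expnSr.
move: IH' step'; set a := n ^ k; set b := n ^_ k; set c := n ^_ k.+1; nia.
Qed.

Local Open Scope ring_scope.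
Local Open Scope sesquilinear_scope.

Lemma char_poly_invmx_conj (R : comUnitRingType) n (P A : 'M[R]_n) :
  P \in unitmx -> char_poly (invmx P *m A *m P) = char_poly A.
Proof.
move=> Pu; rewrite /char_poly.
have PVP : map_mx polyC (invmx P) *m map_mx polyC P = 1%:M.
  by rewrite -map_mxM mulVmx // map_mx1.
have -> : char_poly_mx (invmx P *m A *m P) =
    map_mx polyC (invmx P) *m char_poly_mx A *m map_mx polyC P.
  rewrite /char_poly_mx mulmxBr mulmxBl !map_mxM; congr (_ - _).
  by rewrite -mulmxA -scalar_mxC mulmxA PVP mul1mx.
by rewrite !det_mulmx mulrAC -det_mulmx PVP det1 mul1r.
Qed.

Lemma eigvals_invmx_conj_diag n (P : 'M[algC]_n) x : P \in unitmx ->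
  perm_eq (eigvals (invmx P *m diag_mx x *m P)) [seq x 0 i | i <- enum 'I_n].
Proof.
move=> Pu; rewrite /eigvals; case: closed_field_poly_normal => r /= Er.
apply: prod_XsubC_eq.
move: Er; rewrite char_poly_invmx_conj // (monicP (char_poly_monic _)) scale1r => <-.
rewrite char_poly_trig ?diag_mx_is_trig // big_map big_enum /=.
by apply: eq_bigr => i _; rewrite mxE eqxx mulr1n.
Qed.

Lemma trmxC_invmx_conj_diag (C : numClosedFieldType) n (P : 'M[C]_n) a :
  P \is unitarymx ->
  (invmx P *m diag_mx a *m P)^t* = invmx P *m diag_mx (map_mx conjC a) *m P.
Proof.
move=> Pu; rewrite !trmx_mul !map_mxM tr_diag_mx map_diag_mx invmx_unitary //.
by rewrite trmxCK mulmxA.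
Qed.

Lemma mulmx_invmx_conj_diag (R : comUnitRingType) n (P : 'M[R]_n) a b :
  P \in unitmx ->
  (invmx P *m diag_mx a *m P) *m (invmx P *m diag_mx b *m P) =
  invmx P *m diag_mx (\row_j (a 0 j * b 0 j)) *m P.
Proof. by move=> Pu; rewrite !mulmxA mulmxK // -(mulmxA (invmx P)) mulmx_diag. Qed.

Lemma adjointmxE n (M : 'M[algC]_n) : adjointmx M = M^t*.
Proof. by apply/matrixP => i j; rewrite !mxE. Qed.

(* In the eigenbasis of [M], the unitary [U] multiplies each eigenvalue by
   its conjugate phase, so that [\tr (M *m U)] is the sum of their moduli. *)
Lemma trnorm_normal n (M : 'M[algC]_n) : M \is normalmx ->
  exists2 U : 'M_n, U \is unitarymx &
    trnorm M = \tr (M *m U) /\ trnorm M \is Num.real.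
Proof.
move=> /orthomx_spectralP; set P := spectralmx M; set x := spectral_diag M => EM.
have Pu : P \is unitarymx by apply: spectral_unitarymx.
have Pi : P \in unitmx by apply: unitarymx_unit.
have trnormE : trnorm M = \sum_i `|x 0 i|.
  rewrite /trnorm adjointmxE EM trmxC_invmx_conj_diag // mulmx_invmx_conj_diag //.
  rewrite (perm_big _ (eigvals_invmx_conj_diag _ Pi)) big_map big_enum /=.
  by apply: eq_bigr => i _; rewrite mxE mxE mulrC -normCK sqrCK.
pose e := \row_i (if x 0 i == 0 then 1 else `|x 0 i| / x 0 i).
exists (invmx P *m diag_mx e *m P); [|split].
- apply/unitarymxP; rewrite trmxC_invmx_conj_diag // mulmx_invmx_conj_diag //.
  have -> : \row_j (e 0 j * (map_mx conjC e) 0 j) = const_mx 1.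
    apply/rowP => j; rewrite !mxE; case: ifP => [_|/negbT nz].
      by rewrite conjC1 mulr1.
    by rewrite -normCK normf_div normr_id divff ?expr1n // normr_eq0.
  by rewrite diag_const_mx mulmx1 mulVmx.
- rewrite trnormE EM mulmx_invmx_conj_diag // mxtrace_mulC mulmxA mulmxV //.
  rewrite mul1mx mxtrace_diag; apply: eq_bigr => i _; rewrite !mxE.
  by case: eqP => [->|/eqP nz]; rewrite ?normr0 ?mul0r // mulrC divfK.
- by rewrite trnormE rpred_sum // => i _; rewrite normr_real.
Qed.

Lemma trnorm_le_trace_bound n (M : 'M[algC]_n) (c : algC) : M^t* = M ->
  (forall U : 'M_n, U \is unitarymx ->
     \tr (M *m U) + (\tr (M *m U))^* <= 2 * c) ->
  trnorm M <= c.
Proof.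
move=> selfadj bound.
have normalM : M \is normalmx by rewrite qualifE /= selfadj eqxx.
have [U Uu [-> /CrealP real_tr]] := trnorm_normal normalM.
rewrite -(ler_pM2l (_ : 0 < 2)) ?ltr0n // mulr_natl mulr2n -{2}real_tr.
exact: bound.
Qed.

Section RealVectors.

Variables (C : numClosedFieldType) (n : nat).

(* Expanding [0 <= |t x - z|^2] for a real vector [x]. *)
Lemma real_dotD_conj_le (x z : 'cV[C]_n) (t : C) : map_mx conjC x = x -> 0 < t ->
  (x^T *m z) 0 0 + ((x^T *m z) 0 0)^* <= t * (x^T *m x) 0 0 + (z^t* *m z) 0 0 / t.
Proof.
move=> /matrixP x_real t_gt0.
have xE j : (x j 0)^* = x j 0 by have := x_real j 0; rewrite mxE.
have tE : t^* = t by apply/CrealP; rewrite gtr0_real.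
rewrite !mxE.
under eq_bigr => j _ do rewrite !mxE.
under [X in _ <= t * X + _]eq_bigr => j _ do rewrite !mxE.
under [X in _ <= _ + X / _]eq_bigr => j _ do rewrite !mxE.
set E := \sum_j _ * _; set X := \sum_j x j 0 * x j 0; set Z := \sum_j _ * _.
have sq_ge0 : 0 <= t * t * X - t * (E + E^*) + Z.
  have -> : t * t * X - t * (E + E^*) + Z =
      \sum_j (t * x j 0 - z j 0)^* * (t * x j 0 - z j 0).
    rewrite /E /X /Z rmorph_sum -big_split /= !mulr_sumr -sumrN -!big_split /=.
    by apply: eq_bigr => j _; rewrite !rmorphB !rmorphM /= xE tE; ring.
  by apply: sumr_ge0 => j _; rewrite mulrC -normCK exprn_ge0.
rewrite -(ler_pM2l t_gt0) -subr_ge0.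
have -> : t * (t * X + Z / t) - t * (E + E^*) = t * t * X - t * (E + E^*) + Z.
  by field; rewrite gt_eqF.
exact: sq_ge0.
Qed.

Lemma unitary_mul_dot (U : 'M[C]_n) (x : 'cV_n) :
  U \is unitarymx -> (U *m x)^t* *m (U *m x) = x^t* *m x.
Proof.
move=> Uu; rewrite trmx_mul map_mxM -mulmxA (mulmxA (U^t*)).
by rewrite -invmx_unitary // mulVmx ?unitarymx_unit // mul1mx.
Qed.

(* [\tr ((v v^T - w w^T) U) = <v - w, U v> + <v - w, U^T w>], and each term
   is bounded by [real_dotD_conj_le]. *)
Lemma trace_rank1_sub_le (U : 'M[C]_n) (v w : 'cV_n) (t : C) :
  U \is unitarymx -> map_mx conjC v = v -> map_mx conjC w = w ->
  (v^T *m v) 0 0 = 1 -> (w^T *m w) 0 0 = 1 -> 0 < t ->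
  \tr ((v *m v^T - w *m w^T) *m U) + (\tr ((v *m v^T - w *m w^T) *m U))^*
    <= 2 * t * ((v - w)^T *m (v - w)) 0 0 + 2 / t.
Proof.
move=> Uu v_real w_real v_unit w_unit t_gt0.
have vw_real : map_mx conjC (v - w) = v - w by rewrite map_mxB v_real w_real.
have entryB (X Y : 'M[C]_1) : (X - Y) 0 0 = X 0 0 - Y 0 0 by rewrite !mxE.
have entryT (X : 'M[C]_1) : X 0 0 = X^T 0 0 by rewrite mxE.
have trE : \tr ((v *m v^T - w *m w^T) *m U) =
    ((v - w)^T *m (U *m v)) 0 0 + ((v - w)^T *m (U^T *m w)) 0 0.
  have -> : ((v - w)^T *m (U^T *m w)) 0 0 = (w^T *m U *m (v - w)) 0 0.
    by rewrite [RHS]entryT !trmx_mul trmxK mulmxA.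
  rewrite mulmxBl raddfB /= -!mulmxA (mxtrace_mulC v) (mxtrace_mulC w) !trace_mx11.
  by rewrite linearB /= mulmxBl !mulmxBr !entryB !mulmxA; ring.
have vC : v^t* = v^T by rewrite -map_trmx v_real.
have wC : w^t* = w^T by rewrite -map_trmx w_real.
have le_v := real_dotD_conj_le (U *m v) vw_real t_gt0.
have le_w := real_dotD_conj_le (U^T *m w) vw_real t_gt0.
rewrite unitary_mul_dot // vC v_unit in le_v.
rewrite unitary_mul_dot ?trmx_unitary // wC w_unit in le_w.
rewrite trE rmorphD /= addrACA.
have -> : 2 * t * ((v - w)^T *m (v - w)) 0 0 + 2 / t =
    (t * ((v - w)^T *m (v - w)) 0 0 + 1 / t) + (t * ((v - w)^T *m (v - w)) 0 0 + 1 / t).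
  by field; rewrite gt_eqF.
exact: lerD.
Qed.

End RealVectors.

Lemma sum_enum_val (V : nmodType) (T : finType) (F : T -> V) :
  \sum_(a < #|{: T}|) F (enum_val a) = \sum_i F i.
Proof. by rewrite -big_enum_val; apply: eq_bigl => i; rewrite inE. Qed.

Lemma sum_indicator (R : pzSemiRingType) (T : finType) (P : pred T) :
  \sum_i (P i)%:R = #|P|%:R :> R.
Proof.
rewrite -natr_sum -sum1_card [in RHS]big_mkcond /=.
by congr _%:R; apply: eq_bigr => i _; rewrite unfold_in; case: (P i).
Qed.

Lemma sqrtC_nat_mul (m : nat) : sqrtC (m%:R : algC) * sqrtC m%:R = m%:R.
Proof. by rewrite -expr2 sqrtCK. Qed.

Section UnitIndicator.

Variable T : finType.

Definition unit_indicator (P : pred T) : 'cV[algC]_#|{: T}| :=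
  \col_a ((P (enum_val a))%:R / sqrtC #|P|%:R).

Definition indicator_proj (P : pred T) := unit_indicator P *m (unit_indicator P)^T.

Lemma unit_indicator_real P : map_mx conjC (unit_indicator P) = unit_indicator P.
Proof.
apply/matrixP => a b; rewrite !mxE; apply/CrealP.
by rewrite rpredM ?realn // rpredV sqrtC_real ?ler0n.
Qed.

Lemma trmxC_indicator_proj P : (indicator_proj P)^t* = indicator_proj P.
Proof.
by rewrite /indicator_proj trmx_mul map_mxM trmxK -map_trmx unit_indicator_real.
Qed.

Lemma unit_indicator_dot P Q :
  ((unit_indicator P)^T *m unit_indicator Q) 0 0 =
    #|predI P Q|%:R / (sqrtC #|P|%:R * sqrtC #|Q|%:R).
Proof.
rewrite -(@sum_indicator algC) mulr_suml -sum_enum_val mxE.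
apply: eq_bigr => a _; rewrite !mxE invfM /=.
by case: (P _); case: (Q _); rewrite /= ?mul0r ?mulr0 ?mul1r ?mulr1.
Qed.

Lemma unit_indicator_norm P : (0 < #|P|)%N ->
  ((unit_indicator P)^T *m unit_indicator P) 0 0 = 1.
Proof.
move=> P_gt0; rewrite unit_indicator_dot sqrtC_nat_mul.
rewrite (@eq_card _ (predI P P) P) ?divff ?pnatr_eq0 -?lt0n // => i.
by rewrite !inE andbb.
Qed.

Lemma unit_indicator_dot_subset P Q : {subset Q <= P} -> (0 < #|Q|)%N ->
  ((unit_indicator P)^T *m unit_indicator Q) 0 0 = sqrtC #|Q|%:R / sqrtC #|P|%:R.
Proof.
move=> QP Q_gt0; rewrite unit_indicator_dot.
rewrite (@eq_card _ (predI P Q) Q) => [|i]; last first.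
  by rewrite !inE; apply/andP/idP => [[]//|Qi]; split=> //; apply: QP.
have sQ_neq0 : sqrtC (#|Q|%:R : algC) != 0 by rewrite sqrtC_eq0 pnatr_eq0 -lt0n.
by rewrite -[X in X / _]sqrtC_nat_mul [sqrtC #|P|%:R * _]mulrC invfM mulrA mulfK.
Qed.

Lemma unit_indicator_dist P Q : {subset Q <= P} -> (0 < #|Q|)%N ->
  ((unit_indicator P - unit_indicator Q)^T *m (unit_indicator P - unit_indicator Q)) 0 0
    = 2 - 2 * (sqrtC #|Q|%:R / sqrtC #|P|%:R).
Proof.
move=> QP Q_gt0.
have P_gt0 : (0 < #|P|)%N by apply: leq_trans Q_gt0 (subset_leq_card _); apply/subsetP.
have dotC : ((unit_indicator Q)^T *m unit_indicator P) 0 0 =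
    ((unit_indicator P)^T *m unit_indicator Q) 0 0.
  by rewrite -[unit_indicator P in LHS]trmxK -trmx_mul mxE.
have entryB (X Y : 'M[algC]_1) : (X - Y) 0 0 = X 0 0 - Y 0 0 by rewrite !mxE.
rewrite [_^T](linearB trmx) mulmxBl !mulmxBr !entryB dotC unit_indicator_dot_subset //.
by rewrite !unit_indicator_norm //; ring.
Qed.

Lemma trace_indicator_proj_sub_le (P Q : pred T) (U : 'M_#|{: T}|) (t : algC) :
  U \is unitarymx -> {subset Q <= P} -> (0 < #|Q|)%N -> 0 < t ->
  \tr ((indicator_proj P - indicator_proj Q) *m U)
    + (\tr ((indicator_proj P - indicator_proj Q) *m U))^*
  <= 2 * t * (2 - 2 * (sqrtC #|Q|%:R / sqrtC #|P|%:R)) + 2 / t.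
Proof.
move=> Uu QP Q_gt0 t_gt0.
have P_gt0 : (0 < #|P|)%N by apply: leq_trans Q_gt0 (subset_leq_card _); apply/subsetP.
rewrite -unit_indicator_dist //.
by apply: trace_rank1_sub_le; rewrite ?unit_indicator_real ?unit_indicator_norm.
Qed.

End UnitIndicator.

Lemma sqrtC_ratio_ge (a b : algC) : 0 <= a <= b -> 0 < b -> a / b <= sqrtC a / sqrtC b.
Proof.
move=> /andP[a_ge0 le_ab] b_gt0.
have sb_gt0 : 0 < sqrtC b by rewrite sqrtC_gt0.
set c := sqrtC a / sqrtC b.
have c_ge0 : 0 <= c by rewrite divr_ge0 ?sqrtC_ge0 // ltW.
have c2 : c ^+ 2 = a / b by rewrite expr_div_n !sqrtCK.
have c_le1 : c <= 1.
  rewrite ler_pdivrMr // mul1r ler_sqrtC // nnegrE //.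
  exact: le_trans le_ab.
by rewrite -c2 expr2 ler_piMl.
Qed.

Lemma one_sub_ffact_ratio_le (n k : nat) : (0 < n)%N ->
  1 - (n ^_ k)%:R / (n ^ k)%:R <= k%:R ^+ 2 / n%:R :> algC.
Proof.
move=> n_gt0; have nk_gt0 : (0 < n ^ k)%N by rewrite expn_gt0 n_gt0.
have := ffact_expn_gap n k; rewrite -(ler_nat algC) !natrD !natrM => gap.
rewrite -subr_ge0.
have -> : k%:R ^+ 2 / n%:R - (1 - (n ^_ k)%:R / (n ^ k)%:R) =
    (n%:R * (n ^_ k)%:R + k%:R * k%:R * (n ^ k)%:R - n%:R * (n ^ k)%:R)
      / (n%:R * (n ^ k)%:R) :> algC.
  by field; rewrite !pnatr_eq0 -!lt0n n_gt0 nk_gt0.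
by rewrite divr_ge0 ?subr_ge0 // mulr_ge0 ?ler0n.
Qed.

Lemma prodr_if_const (R : comPzSemiRingType) k (P : pred 'I_k) (c : R) :
  \prod_(t < k) (if P t then c else 0) = if [forall t, P t] then c ^+ k else 0.
Proof.
case: forallP => [allP|notall].
  by rewrite (eq_bigr (fun _ => c)) ?prodr_const ?card_ord // => t _; rewrite allP.
have [t /negbTE Pt] : exists t, ~~ P t.
  by apply/existsP; rewrite -negb_forall; apply/forallP.
by rewrite (bigD1 t) //= Pt mul0r.
Qed.

Definition tuples_in d k (S : {set 'I_d}) : pred (tup d k) :=
  fun i => [forall t, i t \in S].
Arguments tuples_in {d} k S.

Definition proj_gap d k (S : {set 'I_d}) :=
  indicator_proj (tuples_in k S) - indicator_proj (inA S : pred (tup d k)).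

Section Tuples.

Variables d k : nat.

Lemma card_tuples_in (S : {set 'I_d}) : #|tuples_in k S| = (#|S| ^ k)%N.
Proof.
by rewrite -[in RHS](card_ord k) -card_ffun_on; apply: eq_card => i; rewrite !inE.
Qed.

Lemma card_inA (S : {set 'I_d}) : #|(inA S : pred (tup d k))| = (#|S| ^_ k)%N.
Proof.
by rewrite -[in RHS](card_ord k) -card_inj_ffuns_on; apply: eq_card => i; rewrite !inE.
Qed.

Lemma inA_sub_tuples_in (S : {set 'I_d}) :
  {subset (inA S : pred (tup d k)) <= tuples_in k S}.
Proof. by move=> i /andP[]. Qed.

Lemma tensor_pow_phi (S : {set 'I_d}) :
  tensor_pow k (phi S) = indicator_proj (tuples_in k S).
Proof.
apply/matrixP => a b; rewrite !mxE big_ord1 !mxE.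
under eq_bigr => t _ do rewrite mxE.
rewrite prodr_if_const card_tuples_in.
have -> : [forall t, (enum_val a t \in S) && (enum_val b t \in S)] =
    tuples_in k S (enum_val a) && tuples_in k S (enum_val b).
  apply/forallP/andP => [allS|[/forallP Sa /forallP Sb] t].
    by split; apply/forallP => t; case/andP: (allS t).
  by rewrite Sa Sb.
case: (tuples_in k S _); case: (tuples_in k S _); rewrite /= ?mul0r ?mulr0 ?mul1r //.
by rewrite -invfM sqrtC_nat_mul natrX exprVn.
Qed.

Lemma Phitilde_summandE s (S : {set 'I_d}) : #|S| = s ->
  mx_of (fun i j : tup d k => ((s ^_ k)%:R)^-1 * (inA S i && inA S j)%:R)
    = indicator_proj (inA S).
Proof.
move=> <-; apply/matrixP => a b; rewrite !mxE big_ord1 !mxE card_inA.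
case: (inA S _); case: (inA S _); rewrite /= ?mul0r ?mulr0 ?mul1r ?mulr1 //.
by rewrite -invfM sqrtC_nat_mul.
Qed.

Lemma Phi_sub_Phitilde s : Phi d s k - Phitilde d s k = unif_exp s (proj_gap k).
Proof.
rewrite /Phi /Phitilde /unif_exp -scalerBr -sumrB; congr (_ *: _).
by apply: eq_bigr => S /eqP S_s; rewrite tensor_pow_phi Phitilde_summandE.
Qed.

End Tuples.

Section UniformExpectation.

Variables (d s n : nat) (F : {set 'I_d} -> 'M[algC]_n).

Let N := #|[set S : {set 'I_d} | #|S| == s]|.

Let NVC : (N%:R^-1 : algC)^* = N%:R^-1.
Proof. by apply/CrealP; rewrite rpredV realn. Qed.

Lemma trmxC_unif_exp :
  (forall S : {set 'I_d}, (F S)^t* = F S) -> (unif_exp s F)^t* = unif_exp s F.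
Proof.
move=> FC; rewrite /unif_exp linearZ /= map_mxZ /= NVC raddf_sum map_mx_sum /=.
by congr (_ *: _); apply: eq_bigr => S _; rewrite FC.
Qed.

Lemma trace_unif_exp_le (U : 'M_n) (c : algC) : (s <= d)%N ->
  (forall S : {set 'I_d}, #|S| = s -> \tr (F S *m U) + (\tr (F S *m U))^* <= c) ->
  \tr (unif_exp s F *m U) + (\tr (unif_exp s F *m U))^* <= c.
Proof.
move=> le_sd FU.
have N_gt0 : (0 < N)%N by rewrite /N card_draws card_ord bin_gt0.
rewrite /unif_exp -scalemxAl mxtraceZ rmorphM /= NVC -mulrDr.
rewrite mulmx_suml raddf_sum rmorph_sum -big_split /= ler_pdivrMl ?ltr0n //.
have -> : #|[set S : {set 'I_d} | #|S| == s]|%:R * c =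
    \sum_(S : {set 'I_d} | #|S| == s) c.
  rewrite sumr_const -[RHS]mulr_natl; congr (_%:R * _).
  by apply: eq_card => S; rewrite inE.
by apply: ler_sum => S S_s; apply: FU; apply/eqP.
Qed.

End UniformExpectation.

(* The free parameter [t] of [trace_indicator_proj_sub_le] is set to
   [sqrt s / k], which balances its two terms. *)
Lemma trace_proj_gap_le d s k (S : {set 'I_d}) (U : 'M_#|{: tup d k}|) :
  (1 <= k)%N -> (k <= s)%N -> #|S| = s -> U \is unitarymx ->
  \tr (proj_gap k S *m U) + (\tr (proj_gap k S *m U))^*
    <= 2 * (3 * k%:R / sqrtC s%:R).
Proof.
move=> k_gt0 le_ks S_s Uu.
have s_gt0 : (0 < s)%N by apply: leq_trans le_ks.
have k_neq0 : (k%:R : algC) != 0 by rewrite pnatr_eq0 -lt0n.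
have ss_neq0 : sqrtC (s%:R : algC) != 0 by rewrite sqrtC_eq0 pnatr_eq0 -lt0n.
set t : algC := sqrtC s%:R / k%:R.
have t_gt0 : 0 < t by rewrite divr_gt0 ?ltr0n // sqrtC_gt0 ltr0n.
have inA_gt0 : (0 < #|(inA S : pred (tup d k))|)%N by rewrite card_inA S_s ffact_gt0.
have := trace_indicator_proj_sub_le Uu (@inA_sub_tuples_in d k S) inA_gt0 t_gt0.
move/le_trans; apply.
rewrite card_inA card_tuples_in S_s.
have dist_le : 2 - 2 * (sqrtC (s ^_ k)%:R / sqrtC (s ^ k)%:R)
    <= 2 * (k%:R ^+ 2 / s%:R) :> algC.
  rewrite -{1}[2]mulr1 -mulrBr ler_wpM2l ?ler0n //.
  apply: le_trans (one_sub_ffact_ratio_le k s_gt0); rewrite lerD2l lerN2.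
  by rewrite sqrtC_ratio_ge ?ler0n ?ler_nat ?ffact_leq_expn ?ltr0n ?expn_gt0 ?s_gt0.
apply: le_trans (_ : 2 * t * (2 * (k%:R ^+ 2 / s%:R)) + 2 / t <= _).
  by rewrite lerD2r ler_wpM2l // mulr_ge0 ?ler0n // ltW.
rewrite [X in _ <= X](_ : _ = 2 * t * (2 * (k%:R ^+ 2 / s%:R)) + 2 / t) //.
by rewrite /t -[in X in _ ^+ 2 / X](sqrtC_nat_mul s); field; rewrite k_neq0 ss_neq0.
Qed.

Theorem proposition2 :
  exists C : algC, C \is Num.real /\
    forall d s k : nat, (1 <= k)%N -> (k <= s)%N -> (s <= d)%N ->
      trnorm (Phi d s k - Phitilde d s k) <= C * k%:R / sqrtC s%:R.
Proof.
exists 3; split=> [|d s k k_gt0 le_ks le_sd]; first exact: realn.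
rewrite Phi_sub_Phitilde; apply: trnorm_le_trace_bound => [|U Uu].
  apply: trmxC_unif_exp => S.
  by rewrite /proj_gap [_^T](linearB trmx) map_mxB !trmxC_indicator_proj.
apply: trace_unif_exp_le => // S S_s.
exact: (trace_proj_gap_le k_gt0 le_ks S_s Uu).
Qed.
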